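(* If $S$ is a DRC-semigroup, then $$\mu_S=\{(a,b)\in S\times S:\Theta_a=\Theta_b\text{ and }\Delta_a=\Delta_b\}=\{(a,b)\in S\times S:\vartheta_a=\vartheta_b\text{ and }\vartheta'_a=\vartheta'_b\}.$$
   Context: A DRC-semigroup is $(S,\cdot,D,R)$, $(S,\cdot)$ a semigroup, $D,R:S\to S$ with, for all $a,b$: $D(a)a=a$, $aR(a)=a$; $D(ab)=D(aD(b))$, $R(ab)=R(R(a)b)$; $D(ab)=D(a)D(ab)D(a)$, $R(ab)=R(b)R(ab)R(b)$; $R(D(a))=D(a)$, $D(R(a))=R(a)$. Let $P=\{D(a):a\in S\}$ (projections), partially ordered by $p\le q\iff p=pq=qp$. For $a\in S$ define maps (written on the right): $\Theta_a,\Delta_a:P\to P$ by $p\Theta_a=R(pa)$, $p\Delta_a=D(ap)$; $\vartheta_a:\{p\in P:p\le D(a)\}\to P$, $p\vartheta_a=R(pa)$; $\vartheta'_a:\{p\in P:p\le R(a)\}\to P$, $p\vartheta'_a=D(ap)$. Equality of maps includes equality of domains. A congruence on $S$ is a semigroup congruence $\sigma$ with $a\,\sigma\,b\Rightarrow D(a)\,\sigma\,D(b)$ and $R(a)\,\sigma\,R(b)$; it is projection-separating if $p\,\sigma\,q\Rightarrow p=q$ for $p,q\in P$. $\mu_S$ is the maximum projection-separating congruence on $S$. *)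

Record DRCSemigroup : Type := {
  carrier :> Type;
  mul : carrier -> carrier -> carrier;
  Dop : carrier -> carrier;
  Rop : carrier -> carrier;
  mul_assoc : forall a b c, mul (mul a b) c = mul a (mul b c);
  D_left_id : forall a, mul (Dop a) a = a;
  R_right_id : forall a, mul a (Rop a) = a;
  D_mul : forall a b, Dop (mul a b) = Dop (mul a (Dop b));
  R_mul : forall a b, Rop (mul a b) = Rop (mul (Rop a) b);
  D_sandwich : forall a b, Dop (mul a b) = mul (mul (Dop a) (Dop (mul a b))) (Dop a);
  R_sandwich : forall a b, Rop (mul a b) = mul (mul (Rop b) (Rop (mul a b))) (Rop b);
  RD : forall a, Rop (Dop a) = Dop a;
  DR : forall a, Dop (Rop a) = Rop a
}.

Arguments mul {_} _ _.
Arguments Dop {_} _.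
Arguments Rop {_} _.

Section Defs.
Variable S : DRCSemigroup.

Definition is_proj (p : S) : Prop := exists a : S, p = Dop a.

Definition proj_le (p q : S) : Prop := p = mul p q /\ p = mul q p.

(* Theta_a = Theta_b as maps P -> P, p Theta_a = R(pa) *)
Definition Theta_eq (a b : S) : Prop :=
  forall p, is_proj p -> Rop (mul p a) = Rop (mul p b).

(* Delta_a = Delta_b as maps P -> P, p Delta_a = D(ap) *)
Definition Delta_eq (a b : S) : Prop :=
  forall p, is_proj p -> Dop (mul a p) = Dop (mul b p).

(* vartheta_a = vartheta_b: equal domains {p in P : p <= D(a)} and equal values *)
Definition vtheta_eq (a b : S) : Prop :=
  (forall p, is_proj p -> (proj_le p (Dop a) <-> proj_le p (Dop b))) /\
  (forall p, is_proj p -> proj_le p (Dop a) -> Rop (mul p a) = Rop (mul p b)).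

(* vartheta'_a = vartheta'_b: equal domains {p in P : p <= R(a)} and equal values *)
Definition vtheta'_eq (a b : S) : Prop :=
  (forall p, is_proj p -> (proj_le p (Rop a) <-> proj_le p (Rop b))) /\
  (forall p, is_proj p -> proj_le p (Rop a) -> Dop (mul a p) = Dop (mul b p)).

Definition is_congruence (sig : S -> S -> Prop) : Prop :=
  (forall a, sig a a) /\
  (forall a b, sig a b -> sig b a) /\
  (forall a b c, sig a b -> sig b c -> sig a c) /\
  (forall a b c, sig a b -> sig (mul c a) (mul c b)) /\
  (forall a b c, sig a b -> sig (mul a c) (mul b c)) /\
  (forall a b, sig a b -> sig (Dop a) (Dop b) /\ sig (Rop a) (Rop b)).

Definition projection_separating (sig : S -> S -> Prop) : Prop :=
  forall p q, is_proj p -> is_proj q -> sig p q -> p = q.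

Definition is_max_ps_congruence (sig : S -> S -> Prop) : Prop :=
  is_congruence sig /\ projection_separating sig /\
  (forall tau, is_congruence tau -> projection_separating tau ->
     forall a b, tau a b -> sig a b).

End Defs.


(* Theta_a = Theta_b forces R(a) = R(b) (evaluate at p = D(a), where R(D(a) a) = R(a), and
   use R(xy) <= R(y) both ways); dually Delta_a = Delta_b forces D(a) = D(b).  Hence the relation
   is a projection-separating congruence.  It is the largest one: if a tau b for a
   projection-separating congruence tau, then R(pa) tau R(pb) and D(ap) tau D(bp), so these
   projections coincide.  Finally R(pa) = R(R(pD(a)) a) with R(pD(a)) <= D(a), so Theta_a is
   determined by its restriction vartheta_a, and dually for Delta_a. *)

Section DRCSemigroupTheory.

Variable S : DRCSemigroup.

Local Infix "·" := mul (at level 40, left associativity).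

Lemma D_idem (x : S) : Dop (Dop x) = Dop x.
Proof. now rewrite <- (RD S x), DR. Qed.

Lemma is_proj_D (x : S) : is_proj S (Dop x).
Proof. now exists x. Qed.

Lemma is_proj_R (x : S) : is_proj S (Rop x).
Proof. exists (Rop x); symmetry; apply DR. Qed.

Lemma proj_D_id (p : S) : is_proj S p -> Dop p = p.
Proof. intros [a ->]; apply D_idem. Qed.

Lemma proj_mulpp (p : S) : is_proj S p -> p · p = p.
Proof. intros Hp; pose proof (D_left_id S p) as E; now rewrite (proj_D_id p Hp) in E. Qed.

Lemma proj_le_refl (p : S) : is_proj S p -> proj_le S p p.
Proof. intros Hp; split; symmetry; now apply proj_mulpp. Qed.

Lemma proj_le_antisym (p q : S) : proj_le S p q -> proj_le S q p -> p = q.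
Proof. intros [_ Hpq] [Hqp _]; now rewrite Hpq, <- Hqp. Qed.

Lemma proj_le_sandwich (q r : S) : q · q = q -> r = q · r · q -> proj_le S r q.
Proof.
  intros Hq Hr; split; symmetry.
  - now rewrite Hr, mul_assoc, Hq.
  - now rewrite Hr, <- !mul_assoc, Hq.
Qed.

Lemma D_mul_le (x y : S) : proj_le S (Dop (x · y)) (Dop x).
Proof. apply proj_le_sandwich; [apply proj_mulpp, is_proj_D | apply D_sandwich]. Qed.

Lemma R_mul_le (x y : S) : proj_le S (Rop (x · y)) (Rop y).
Proof. apply proj_le_sandwich; [apply proj_mulpp, is_proj_R | apply R_sandwich]. Qed.

Lemma R_mul_DR (x a : S) : Rop (x · a) = Rop (Rop (x · Dop a) · a).
Proof. now rewrite <- R_mul, mul_assoc, D_left_id. Qed.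

Lemma D_mul_RD (a x : S) : Dop (a · x) = Dop (a · Dop (Rop a · x)).
Proof. now rewrite <- D_mul, <- mul_assoc, R_right_id. Qed.

Lemma Theta_eq_R (a b : S) : Theta_eq S a b -> Rop a = Rop b.
Proof.
  intros HT.
  assert (Ha : Rop a = Rop (Dop a · b)) by now rewrite <- (HT _ (is_proj_D a)), D_left_id.
  assert (Hb : Rop b = Rop (Dop b · a)) by now rewrite (HT _ (is_proj_D b)), D_left_id.
  apply proj_le_antisym; [rewrite Ha | rewrite Hb]; apply R_mul_le.
Qed.

Lemma Delta_eq_D (a b : S) : Delta_eq S a b -> Dop a = Dop b.
Proof.
  intros HD.
  assert (Ha : Dop a = Dop (b · Rop a)) by now rewrite <- (HD _ (is_proj_R a)), R_right_id.
  assert (Hb : Dop b = Dop (a · Rop b)) by now rewrite (HD _ (is_proj_R b)), R_right_id.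
  apply proj_le_antisym; [rewrite Ha | rewrite Hb]; apply D_mul_le.
Qed.

Lemma Theta_eq_mull (a b c : S) : Theta_eq S a b -> Theta_eq S (c · a) (c · b).
Proof.
  intros HT p _; rewrite <- !mul_assoc, (R_mul S (p · c) a), (R_mul S (p · c) b).
  apply HT, is_proj_R.
Qed.

Lemma Theta_eq_mulr (a b c : S) : Theta_eq S a b -> Theta_eq S (a · c) (b · c).
Proof.
  intros HT p Hp; rewrite <- !mul_assoc, (R_mul S (p · a) c), (R_mul S (p · b) c).
  now rewrite (HT p Hp).
Qed.

Lemma Delta_eq_mull (a b c : S) : Delta_eq S a b -> Delta_eq S (c · a) (c · b).
Proof.
  intros HD p Hp; rewrite !mul_assoc, (D_mul S c (a · p)), (D_mul S c (b · p)).
  now rewrite (HD p Hp).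
Qed.

Lemma Delta_eq_mulr (a b c : S) : Delta_eq S a b -> Delta_eq S (a · c) (b · c).
Proof.
  intros HD p _; rewrite !mul_assoc, (D_mul S a (c · p)), (D_mul S b (c · p)).
  apply HD, is_proj_D.
Qed.

Definition Theta_Delta_eq (a b : S) : Prop := Theta_eq S a b /\ Delta_eq S a b.

Lemma Theta_Delta_eq_DR (a b : S) :
  Theta_Delta_eq a b -> Dop a = Dop b /\ Rop a = Rop b.
Proof. intros [HT HD]; split; [apply Delta_eq_D | apply Theta_eq_R]; assumption. Qed.

Lemma Theta_Delta_congruence : is_congruence S Theta_Delta_eq.
Proof.
  split; [|split; [|split; [|split; [|split]]]].
  - now split; intros p _.
  - intros a b [HT HD]; split; intros p Hp; symmetry; auto.
  - intros a b c [HT HD] [HT' HD']; split; intros p Hp;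
      [rewrite (HT p Hp) | rewrite (HD p Hp)]; auto.
  - intros a b c [HT HD]; split; [apply Theta_eq_mull | apply Delta_eq_mull]; assumption.
  - intros a b c [HT HD]; split; [apply Theta_eq_mulr | apply Delta_eq_mulr]; assumption.
  - intros a b Hab; destruct (Theta_Delta_eq_DR a b Hab) as [-> ->].
    now split; split; intros p _.
Qed.

Lemma Theta_Delta_projection_separating : projection_separating S Theta_Delta_eq.
Proof.
  intros p q Hp Hq Hpq.
  rewrite <- (proj_D_id p Hp), <- (proj_D_id q Hq).
  apply Theta_Delta_eq_DR, Hpq.
Qed.

Lemma projection_separating_Theta_Delta (tau : S -> S -> Prop) :
  is_congruence S tau -> projection_separating S tau ->
  forall a b, tau a b -> Theta_Delta_eq a b.
Proof.
  intros (_ & _ & _ & Hl & Hr & HDR) Hps a b Hab; split; intros p _.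
  - apply Hps; [apply is_proj_R | apply is_proj_R |].
    exact (proj2 (HDR _ _ (Hl _ _ p Hab))).
  - apply Hps; [apply is_proj_D | apply is_proj_D |].
    exact (proj1 (HDR _ _ (Hr _ _ p Hab))).
Qed.

Lemma vtheta_eq_of_Theta_Delta (a b : S) :
  Theta_eq S a b -> Delta_eq S a b -> vtheta_eq S a b.
Proof.
  intros HT HD; split.
  - intros p _; now rewrite (Delta_eq_D a b HD).
  - intros p Hp _; now apply HT.
Qed.

Lemma vtheta'_eq_of_Theta_Delta (a b : S) :
  Theta_eq S a b -> Delta_eq S a b -> vtheta'_eq S a b.
Proof.
  intros HT HD; split.
  - intros p _; now rewrite (Theta_eq_R a b HT).
  - intros p Hp _; now apply HD.
Qed.

Lemma vtheta_eq_D (a b : S) : vtheta_eq S a b -> Dop a = Dop b.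
Proof.
  intros [Hdom _]; apply proj_le_antisym.
  - apply (Hdom _ (is_proj_D a)), proj_le_refl, is_proj_D.
  - apply (Hdom _ (is_proj_D b)), proj_le_refl, is_proj_D.
Qed.

Lemma vtheta'_eq_R (a b : S) : vtheta'_eq S a b -> Rop a = Rop b.
Proof.
  intros [Hdom _]; apply proj_le_antisym.
  - apply (Hdom _ (is_proj_R a)), proj_le_refl, is_proj_R.
  - apply (Hdom _ (is_proj_R b)), proj_le_refl, is_proj_R.
Qed.

Lemma vtheta_eq_Theta (a b : S) : vtheta_eq S a b -> Theta_eq S a b.
Proof.
  intros Hv p _; rewrite (R_mul_DR p a), (R_mul_DR p b), <- (vtheta_eq_D a b Hv).
  apply Hv; [apply is_proj_R |].
  pose proof (R_mul_le p (Dop a)) as Hle; now rewrite RD in Hle.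
Qed.

Lemma vtheta'_eq_Delta (a b : S) : vtheta'_eq S a b -> Delta_eq S a b.
Proof.
  intros Hv p _; rewrite (D_mul_RD a p), (D_mul_RD b p), <- (vtheta'_eq_R a b Hv).
  apply Hv; [apply is_proj_D |].
  pose proof (D_mul_le (Rop a) p) as Hle; now rewrite DR in Hle.
Qed.

End DRCSemigroupTheory.

Theorem proposition8p17 (S : DRCSemigroup) :
  is_max_ps_congruence S (fun a b : S => Theta_eq S a b /\ Delta_eq S a b) /\
  (forall a b : S,
     (Theta_eq S a b /\ Delta_eq S a b) <-> (vtheta_eq S a b /\ vtheta'_eq S a b)).
Proof.
  split; [split; [|split] |].
  - apply Theta_Delta_congruence.
  - apply Theta_Delta_projection_separating.
  - apply projection_separating_Theta_Delta.
  - intros a b; split.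
    + intros [HT HD]; split.
      * now apply vtheta_eq_of_Theta_Delta.
      * now apply vtheta'_eq_of_Theta_Delta.
    + intros [Hv Hv']; split.
      * now apply vtheta_eq_Theta.
      * now apply vtheta'_eq_Delta.
Qed.
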